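(* Let $P$ be a simple $n$-polytope, $\lambda$ a characteristic function on $P$ with $X(P,\lambda)$ orientable, and $G\subset\mathbb{Z}_2^n$ the orientation-preserving subgroup. Then $G_F\not\subset G$ for every (proper) face $F$ of $P$ lying in $\partial P$.
   Context: A characteristic function is a map $\lambda$ from the facets $F_1,\dots,F_m$ of $P$ to $\mathbb{Z}_2^n$, $\lambda_i=\lambda(F_i)$, such that for every codimension-$k$ face $F=F_{i_1}\cap\dots\cap F_{i_k}$ the vectors $\lambda_{i_1},\dots,\lambda_{i_k}$ are linearly independent. $G_F$ denotes the subgroup of $\mathbb{Z}_2^n$ generated by the $\lambda_i$ with $F_i\supseteq F$. The small cover is $X(P,\lambda)=P\times\mathbb{Z}_2^n/\!\sim$ with $(p,a)\sim(q,b)$ iff $p=q$ and $b-a\in G_{F(p)}$ ($F(p)$ the face containing $p$ in its relative interior), with $\mathbb{Z}_2^n$ acting by translation in the second factor. The orientation-preserving subgroup $G$ is the set of elements acting by orientation-preserving homeomorphisms; it equals $\ker\xi$ for a functional $\xi\in(\mathbb{Z}_2^n)^*$ with $\xi(\lambda_i)=1$ for all $i$. *)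

From HB Require Import structures.
From mathcomp Require Import all_boot all_order all_algebra.
Set Implicit Arguments. Unset Strict Implicit. Unset Printing Implicit Defensive.
Import GRing.Theory.
Local Open Scope ring_scope.

(* Combinatorial model of a simple n-polytope P with m facets F_0..F_(m-1).
   [is_face S] means that the intersection of the facets F_i, i in S, is
   nonempty; for a simple polytope this intersection is then a face of
   codimension #|S|, and every face F arises from exactly one such S, namely
   the set of facets containing F.  S = set0 corresponds to P itself; the
   proper faces (those in the boundary of P) are those with S != set0. *)
Record simple_polytope (n m : nat) := SimplePolytope {
  is_face : {set 'I_m} -> bool;
  face_P : is_face set0;
  face_facet : forall i : 'I_m, is_face [set i];
  face_down : forall S T : {set 'I_m}, T \subset S -> is_face S -> is_face T;
  face_codim : forall S : {set 'I_m}, is_face S -> (#|S| <= n)%N;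
  face_vertex : forall S : {set 'I_m}, is_face S ->
     exists2 V : {set 'I_m}, S \subset V & is_face V && (#|V| == n)%N
}.

Notation Z2vec n := 'rV['F_2]_n.

(* G_F for the face F = /\_{i in S} F_i: the subspace (= subgroup) of Z_2^n
   spanned by the lambda_i with F_i containing F. *)
Definition G_F n m (lam : 'I_m -> Z2vec n) (S : {set 'I_m}) : 'M['F_2]_n :=
  (\sum_(i in S) <<lam i>>)%MS.

Definition is_char_fun n m (P : simple_polytope n m) (lam : 'I_m -> Z2vec n) :=
  forall S : {set 'I_m}, is_face P S -> \rank (G_F lam S) = #|S|%N.

(* A functional xi in (Z_2^n)^* is represented by a column vector;
   xi(v) = v *m xi.  X(P,lam) is orientable iff there is xi with xi(lam_i)=1
   for all i, and then G = ker xi. *)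
Definition xi_condition n m (lam : 'I_m -> Z2vec n) (xi : 'cV['F_2]_n) :=
  forall i, lam i *m xi = 1.

Definition orientation_subgroup n (xi : 'cV['F_2]_n) : pred (Z2vec n) :=
  fun v => v *m xi == 0.

From mathcomp Require Import all_boot all_order all_algebra.
Import GRing.Theory.
Local Open Scope ring_scope.

Lemma G_F_facet {n m} (lam : 'I_m -> 'rV['F_2]_n) {S : {set 'I_m}} {i : 'I_m} :
  i \in S -> (lam i <= G_F lam S)%MS.
Proof. by move=> iS; apply: (sumsmx_sup i) => //; rewrite genmxE. Qed.

Lemma facet_notin_orientation_subgroup {n m} {lam : 'I_m -> 'rV['F_2]_n}
    {xi : 'cV['F_2]_n} (i : 'I_m) :
  xi_condition lam xi -> lam i \notin orientation_subgroup xi.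
Proof. by move=> hxi; rewrite unfold_in /orientation_subgroup hxi oner_eq0. Qed.

Theorem lemma2p6 (n m : nat) (P : simple_polytope n m)
  (lam : 'I_m -> 'rV['F_2]_n) (hchar : is_char_fun P lam)
  (xi : 'cV['F_2]_n) (horient : xi_condition lam xi)
  (S : {set 'I_m}) (hface : is_face P S) (hproper : S != set0) :
  ~ (forall v : 'rV['F_2]_n, (v <= G_F lam S)%MS -> v \in orientation_subgroup xi).
Proof.
have [i iS] := set0Pn S hproper.
move=> G_F_sub_G.
have := G_F_sub_G _ (G_F_facet lam iS).
exact/negP/facet_notin_orientation_subgroup.
Qed.
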